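(* Let $\epsilon>0$ be a constant and let $\alpha\in(1/2,1)$ be a constant. Let $\mathbf C,\mathbf B$ be independent, uniformly random $m\times n$ matrices over $\mathbb{Z}_2$ with $\alpha n\le m\le n$. Then for sufficiently large $n$ there exists a constant $\delta>0$ such that $\Pr[\operatorname{rank}(\mathbf C^\intercal\mathbf B+\mathbf B^\intercal\mathbf C)\le(1-\epsilon)n]\le2^{-\delta n^2}$. *)

From mathcomp Require Import all_boot all_algebra.
From Stdlib Require Import Reals.

Set Implicit Arguments.
Unset Strict Implicit.
Unset Printing Implicit Defensive.

Local Open Scope ring_scope.

Definition symform (m n : nat) (C B : 'M['F_2]_(m, n)) : 'M['F_2]_n :=
  C^T *m B + B^T *m C.

Definition low_rank (m n : nat) (eps : R) (C B : 'M['F_2]_(m, n)) : bool :=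
  if Rle_dec (INR (\rank (symform C B))) ((1 - eps) * INR n)%R
  then true else false.

Definition bad_count (m n : nat) (eps : R) : nat :=
  #|[set CB : 'M['F_2]_(m, n) * 'M['F_2]_(m, n) | low_rank eps CB.1 CB.2]|.

(* Probability of the event for C, B independent uniformly random
   m x n matrices over F_2 (the sample space has 2^(2mn) equally likely
   points). *)
Definition prob_low_rank (m n : nat) (eps : R) : R :=
  (INR (bad_count m n eps) / (2 ^ (2 * m * n)))%R.

From mathcomp Require Import all_boot all_algebra.
From mathcomp Require Import zify.

(* Put R := [C^T | B^T], an n x 2m matrix, so that C^T B + B^T C = R J R^T for the
   invertible hyperbolic matrix J = [0 1; 1 0]. Take h ~ n / (5K) with 1/K < eps and
   k := 4h <= eps n. If rank (R J R^T) <= n - k, then either rank R < n - h, or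
   rank R >= n - h and X (R J R^T) = 0 for some row-free k x n matrix X. Both events
   are bounded by double counting the pairs (R, X): each bad R has at least
   |GL_k| >= 2^(k(k-1)) witnesses X, while a fixed X leaves few R. In the first case
   X R = 0 confines the columns of R to ker X. In the second, after moving X to the
   first k rows, each of these rows must be J-orthogonal to all rows of R, which saves
   as many bits as the rank of the rows below it. Either way the savings beat the
   2^(kn) choices of X by 2^(Omega(h^2)), and h^2 is of order n^2. *)

Set Implicit Arguments.
Unset Strict Implicit.
Unset Printing Implicit Defensive.

Import GRing.Theory.

Local Open Scope ring_scope.
Local Open Scope nat_scope.

Lemma card_col_mx (T : finType) m n (P : pred 'M[T]_(1 + m, n)) :
  #|[set A | P A]| = \sum_(A0 : 'M_(m, n)) #|[set v : 'rV_n | P (col_mx v A0)]|.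
Proof.
rewrite -sum1dep_card.
rewrite (reindex (fun vA0 : 'M[T]_(m, n) * 'rV_n => col_mx vA0.2 vA0.1)) /=.
  rewrite -(pair_big_dep xpredT (fun A0 v => P (col_mx v A0)) (fun _ _ => 1)).
  by apply: eq_bigr => A0 _; rewrite sum1dep_card.
exists (fun A => (dsubmx A, usubmx A)) => [[A0 v] _ | A _] /=.
  by rewrite col_mxKd col_mxKu.
by rewrite vsubmxK.
Qed.

Lemma double_count (T U : finType) (S : {set T}) (P : T -> U -> bool) :
  \sum_(A in S) #|[set X | P A X]| = \sum_X #|[set A in S | P A X]|.
Proof.
have cardE (V : finType) (Q : pred V) : #|[set x | Q x]| = \sum_x Q x.
  by rewrite -sum1dep_card big_mkcond; apply: eq_bigr => x _; case: (Q x).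
under eq_bigr do rewrite cardE.
rewrite exchange_big; apply: eq_bigr => X _.
by rewrite cardE big_mkcond; apply: eq_bigr => A _; case: (A \in S).
Qed.

Lemma leq_expn_bin2_prod b k : 1 < b ->
  b ^ 'C(k, 2) <= \prod_(1 <= i < k.+1) (b ^ i - 1).
Proof.
move=> b_gt1; elim: k => [|k IHk]; first by rewrite big_geq.
rewrite big_nat_recr //= binS bin1 expnD leq_mul // expnS.
by have := expn_gt0 b k; nia.
Qed.

Lemma mul_pred_bin2 k : k * k.-1 = 'C(k, 2) + 'C(k, 2).
Proof. by rewrite addnn -mul2n -mul_bin_diag bin1. Qed.

Lemma mxrank_col_mx_le (F : fieldType) m1 m2 n (A : 'M[F]_(m1, n)) (B : 'M_(m2, n)) :
  \rank (col_mx A B) <= \rank A + \rank B.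
Proof. by rewrite -addsmxE; exact: (mxrank_adds_leqif A B).1. Qed.

Section FiniteFieldMatrices.
Variable F : finFieldType.
Local Notation q := #|F|.

Let q_gt1 : 1 < q := card_finNzRing_gt1 F.

Lemma leq_card_submx k n l (U : 'M[F]_(l, n)) :
  #|[set A : 'M_(k, n) | (A <= U)%MS]| <= q ^ (k * \rank U).
Proof.
have coordK (A : 'M_(k, n)) : (A <= U)%MS -> (A *m pinvmx (row_base U) *m row_base U)%R = A.
  by rewrite -(eq_row_base U); apply: mulmxKpV.
have inj : {in [set A : 'M_(k, n) | (A <= U)%MS] &, injective (mulmx^~ (pinvmx (row_base U)))}.
  move=> A B; rewrite !inE => sAU sBU eqAB.
  by rewrite -(coordK A sAU) -(coordK B sBU) eqAB.
by rewrite -(card_in_imset inj) -card_mx max_card.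
Qed.

Lemma leq_card_sub_kermx k n l (M : 'M[F]_(n, l)) :
  #|[set A : 'M_(k, n) | (A *m M == 0)%R]| <= q ^ (k * (n - \rank M)).
Proof.
rewrite -mxrank_ker; apply: leq_trans (leq_card_submx k (kermx M)).
by apply/subset_leq_card/subsetP => A; rewrite !inE => /eqP/sub_kermxP.
Qed.

Lemma leq_expn_card_unitmx k : q ^ (k * k.-1) <= #|[set W : 'M[F]_k | W \in unitmx]|.
Proof.
case: k => [|k].
  by rewrite card_gt0; apply/set0Pn; exists 1%:M%R; rewrite inE unitmx1.
have -> : #|[set W : 'M[F]_k.+1 | W \in unitmx]| = #|'GL_k.+1[F]%g|.
  by rewrite cardsT card_sub; apply: eq_card => A; rewrite !inE.
rewrite card_GL // mul_pred_bin2 expnD leq_mul2l.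
by rewrite leq_expn_bin2_prod ?q_gt1 ?orbT.
Qed.

Lemma leq_expn_card_row_free_kermx k n l (M : 'M[F]_(n, l)) : \rank M + k <= n ->
  q ^ (k * k.-1) <= #|[set X : 'M_(k, n) | row_free X && (X *m M == 0)%R]|.
Proof.
move=> rkM; set K := kermx M.
have rkK : k <= \rank K by rewrite mxrank_ker; lia.
pose B : 'M_(k, n) := (pid_mx k *m row_base K)%R.
have freeB : row_free B.
  by rewrite /row_free mxrankMfree ?row_base_free // rank_pid_mx.
have BM : (B *m M = 0)%R.
  apply/sub_kermxP/(submx_trans (submxMl _ _)).
  by rewrite eq_row_base.
apply: leq_trans (leq_expn_card_unitmx k) _.
have inj : {in [set W : 'M_k | W \in unitmx] &, injective (mulmx^~ B)}.
  by move=> W1 W2 _ _; apply: row_free_inj.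
rewrite -(card_in_imset inj); apply/subset_leq_card/subsetP => X.
case/imsetP => W; rewrite inE => unitW ->; rewrite inE.
by rewrite /row_free mxrankMfree // mxrank_unit // eqxx -mulmxA BM mulmx0 /=.
Qed.

Lemma leq_card_kermx_witness (T : finType) (S : {set T}) k n l
    (f : T -> 'M[F]_(n, l)) (a b : nat) :
  {in S, forall A, \rank (f A) + k <= n} ->
  (forall X : 'M_(k, n), row_free X -> #|[set A in S | (X *m f A == 0)%R]| * a <= b) ->
  #|S| * q ^ (k * k.-1) * a <= q ^ (k * n) * b.
Proof.
move=> rkS cardSX.
have lower : #|S| * q ^ (k * k.-1) <=
    \sum_(A in S) #|[set X : 'M_(k, n) | row_free X && (X *m f A == 0)%R]|.
  by rewrite -sum_nat_const; apply: leq_sum => A /rkS/leq_expn_card_row_free_kermx.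
rewrite double_count in lower; apply: leq_trans (leq_mul lower (leqnn a)) _.
rewrite big_distrl /= -card_mx -sum_nat_const; apply: leq_sum => X _.
case: (boolP (row_free X)) => [/cardSX // | _].
by rewrite (_ : [set A in S | _] = set0) ?cards0 //; apply/setP => A; rewrite !inE andbF.
Qed.

Lemma leq_card_rank_deficient d n p : d <= n <= p ->
  #|[set R : 'M[F]_(n, p) | \rank R + d <= n]| * q ^ (d * d.-1) <= q ^ (p * n).
Proof.
case/andP=> le_dn le_np.
apply: (@leq_trans (q ^ (d * n) * q ^ (p * (n - d)))); last first.
  by rewrite -expnD leq_exp2l ?q_gt1 //; nia.
rewrite -[X in X <= _]muln1; apply: (leq_card_kermx_witness (f := id)) => [R | X freeX].
  by rewrite inE.
have rkXt : \rank X^T = d by rewrite mxrank_tr (eqP freeX).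
rewrite muln1 -(card_imset _ (@trmx_inj _ _ _)).
apply: (@leq_trans #|[set A : 'M_(p, n) | (A *m X^T == 0)%R]|).
  apply/subset_leq_card/subsetP => Rt /imsetP[R].
  by rewrite !inE => /andP[_ /eqP XR] ->; rewrite -trmx_mul XR trmx0.
by have := leq_card_sub_kermx p X^T; rewrite rkXt.
Qed.

Section GramMatrices.
Variables (p : nat) (J : 'M[F]_p).
Hypothesis unitJ : J \in unitmx.

Definition top_orthogonal n c (A : 'M[F]_(n, p)) :=
  [forall i : 'I_n, (i < c) ==> (row i A *m J *m A^T == 0)%R].

Lemma top_orthogonal_col_mx n c (v : 'rV[F]_p) (A : 'M[F]_(n, p)) :
  top_orthogonal c.+1 (col_mx v A) -> top_orthogonal c A /\ (v *m (J *m A^T) == 0)%R.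
Proof.
move/forallP=> orth; split.
  apply/forallP => i; apply/implyP => lt_ic.
  have /implyP := orth (rshift 1 i); rewrite /= add1n ltnS => /(_ lt_ic).
  by rewrite rowKd tr_col_mx mul_mx_row row_mx_eq0 => /andP[].
have /implyP/(_ isT) := orth (lshift n ord0).
by rewrite rowKu row_id tr_col_mx mul_mx_row row_mx_eq0 mulmxA => /andP[].
Qed.

Lemma leq_card_top_orthogonal r h c : h <= r ->
  #|[set A : 'M[F]_(c + r, p) | top_orthogonal c A && (c + r <= \rank A + h)]|
    * q ^ ('C(c, 2) + c * (r - h)) <= q ^ (p * (c + r)).
Proof.
move=> le_hr; elim: c => [|c IHc].
  by rewrite muln1 (leq_trans (max_card _)) // card_mx mulnC.
set Q := [set A | _] in IHc.
pose P (A : 'M_(1 + (c + r), p)) := top_orthogonal c.+1 A && (c.+1 + r <= \rank A + h).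
rewrite (card_col_mx P).
(* The new top row is J-orthogonal to the rows of A0, whose rank is >= c + r - h. *)
have step (A0 : 'M_(c + r, p)) :
    #|[set v | P (col_mx v A0)]| * q ^ (c + (r - h)) <= (if A0 \in Q then q ^ p else 0).
  case: ifP => [| notQA0].
    rewrite inE => /andP[_ rkA0].
    have rkJA0 : \rank (J *m A0^T) = \rank A0.
      rewrite -mxrank_tr trmx_mul trmxK mxrankMfree ?mxrank_tr //.
      by rewrite row_free_unit unitmx_tr.
    apply: (@leq_trans (q ^ (1 * (p - \rank A0)) * q ^ (c + (r - h)))).
      rewrite leq_mul2r -rkJA0 (leq_trans _ (leq_card_sub_kermx 1 _)) ?orbT //.
      apply/subset_leq_card/subsetP => v; rewrite !inE => /andP[orth _].
      by case: (top_orthogonal_col_mx orth).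
    by rewrite -expnD leq_exp2l ?q_gt1 //; have := rank_leq_col A0; lia.
  rewrite leqn0 muln_eq0 cards_eq0; apply/orP; left; apply/eqP/setP => v.
  rewrite !inE; apply/negbTE/andP => -[/top_orthogonal_col_mx[orth _] rk].
  move/negbT: notQA0; rewrite inE orth -ltnNge => lt_rkA0.
  have rk_col : \rank (col_mx v A0) <= 1 + \rank A0.
    exact: leq_trans (mxrank_col_mx_le v A0) (leq_add (rank_leq_row v) (leqnn _)).
  by have := leq_trans rk (leq_add rk_col (leqnn h)); lia.
have sum_step : (\sum_A0 #|[set v | P (col_mx v A0)]|) * q ^ (c + (r - h)) <= #|Q| * q ^ p.
  rewrite big_distrl /=; apply: (@leq_trans (\sum_A0 (if A0 \in Q then q ^ p else 0))).
    by apply: leq_sum => A0 _; exact: step.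
  by rewrite -big_mkcond sum_nat_const.
have -> : 'C(c.+1, 2) + c.+1 * (r - h) = ('C(c, 2) + c * (r - h)) + (c + (r - h)).
  by rewrite binS bin1; lia.
rewrite expnD mulnCA; apply: leq_trans (leq_mul (leqnn _) sum_step) _.
rewrite mulnA [_ * #|Q|]mulnC; apply: leq_trans (leq_mul IHc (leqnn _)) _.
by rewrite -expnD addSn mulnS addnC.
Qed.

Lemma leq_card_gram_kermx n k h (X : 'M[F]_(k, n)) :
  row_free X -> k + h <= n ->
  #|[set R : 'M[F]_(n, p) | (n <= \rank R + h) && (X *m (R *m J *m R^T) == 0)%R]|
    * q ^ ('C(k, 2) + k * (n - k - h)) <= q ^ (p * n).
Proof.
(* Completing X to an invertible P, the map R |-> P R moves X to the top k rows. *)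
move=> freeX le_khn; set r := \rank (X^C)%MS.
have def_n : k + r = n by rewrite /r mxrank_compl (eqP freeX); lia.
pose P : 'M_(k + r, n) := col_mx X (row_base (X^C)%MS).
have /row_fullP[P' P'P] : row_full P.
  rewrite /row_full /P -addsmxE (adds_eqmx (eqmx_refl X) (eq_row_base _)).
  exact: addsmx_compl_full.
have injP : injective (mulmx P : 'M_(n, p) -> _).
  by move=> R1 R2 /(congr1 (mulmx P')); rewrite !mulmxA P'P !mul1mx.
have rkPR (R : 'M_(n, p)) : \rank (P *m R) = \rank R.
  apply/eqP; rewrite eqn_leq mxrankM_maxr /=.
  by rewrite -{1}(mul1mx R) -P'P -mulmxA mxrankM_maxr.
rewrite (_ : n - k - h = r - h); last lia.
rewrite (_ : p * n = p * (k + r)); last by rewrite def_n.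
have le_hr : h <= r by lia.
apply: leq_trans (leq_card_top_orthogonal k le_hr).
rewrite leq_mul2r -(card_imset _ injP); apply/orP; right.
apply/subset_leq_card/subsetP => A /imsetP[R]; rewrite !inE => /andP[rkR /eqP XM] ->.
have -> : k + r <= \rank (P *m R) + h by rewrite rkPR def_n.
rewrite andbT; apply/forallP => i; apply/implyP => lt_ik.
rewrite -!row_mul (_ : i = lshift r (Ordinal lt_ik)); last exact: val_inj.
move: XM; rewrite !mulmxA trmx_mul !mulmxA !mul_col_mx rowKu => ->.
by rewrite mul0mx row0.
Qed.

Lemma leq_card_gram_deficient_rank_ge n k h : k + h <= n ->
  #|[set R : 'M[F]_(n, p) | (\rank (R *m J *m R^T) + k <= n) && (n <= \rank R + h)]|
    * q ^ (k * k.-1) * q ^ ('C(k, 2) + k * (n - k - h)) <= q ^ (k * n) * q ^ (p * n).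
Proof.
move=> le_khn; apply: (leq_card_kermx_witness (f := fun R => R *m J *m R^T)%R).
  by move=> R; rewrite inE => /andP[].
move=> X freeX; apply: leq_trans (leq_card_gram_kermx freeX le_khn).
rewrite leq_mul2r; apply/orP; right; apply/subset_leq_card/subsetP => R.
by rewrite !inE => /andP[/andP[_ ->]].
Qed.

Lemma leq_card_gram_rank_deficient n h : 2 <= h -> 5 * h <= n <= p ->
  #|[set R : 'M[F]_(n, p) | \rank (R *m J *m R^T) + 4 * h <= n]| * q ^ (h * h)
    <= 2 * q ^ (p * n).
Proof.
move=> le_2h /andP[le_5hn le_np].
pose D := [set R : 'M[F]_(n, p) | \rank R + h.+1 <= n].
pose G := [set R : 'M[F]_(n, p) | (\rank (R *m J *m R^T) + 4 * h <= n) && (n <= \rank R + h)].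
apply: (@leq_trans (#|D :|: G| * q ^ (h * h))).
  rewrite leq_mul2r; apply/orP; right; apply/subset_leq_card/subsetP => R.
  by rewrite !inE => ->; rewrite orbC; case: leqP => //=; rewrite addnS.
apply: leq_trans (leq_mul (leq_card_setU D G).1 (leqnn _)) _.
rewrite mulnDl mul2n -addnn leq_add //.
  have le_hnp : h.+1 <= n <= p by rewrite le_np andbT; lia.
  apply: leq_trans (leq_card_rank_deficient le_hnp).
  by rewrite leq_mul2l leq_exp2l ?q_gt1 // /= leq_mul2r ltnW ?orbT.
have le_khn : 4 * h + h <= n by lia.
have bound := leq_card_gram_deficient_rank_ge le_khn; rewrite -/G -mulnA -!expnD in bound.
have pos : 0 < q ^ (4 * h * n) by rewrite expn_gt0 ltnW.
rewrite -(leq_pmul2l pos) -expnD; apply: leq_trans bound.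
rewrite mulnCA -expnD leq_mul2l leq_exp2l ?q_gt1 //; apply/orP; right.
(* With k = 4h the gain over the k n bits of X is 4h^2 - 6h >= h^2. *)
by have := mul_pred_bin2 (4 * h); nia.
Qed.

End GramMatrices.
End FiniteFieldMatrices.

Definition hyperbolic_mx (R : pzSemiRingType) m : 'M[R]_(m + m) :=
  block_mx 0%R 1%:M%R 1%:M%R 0%R.

Lemma hyperbolic_mx_unit (R : comUnitRingType) m : hyperbolic_mx R m \in unitmx.
Proof.
suff /mulmx1_unit[] : (hyperbolic_mx R m *m hyperbolic_mx R m = 1%:M)%R by [].
rewrite mulmx_block !mulmx0 !mul0mx !mulmx1 !addr0 !add0r.
by rewrite -scalar_mx_block.
Qed.

Lemma symformE m n (C B : 'M['F_2]_(m, n)) :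
  symform C B = (row_mx C^T B^T *m hyperbolic_mx _ m *m (row_mx C^T B^T)^T)%R.
Proof.
rewrite mul_row_block !mulmx0 !mulmx1 addr0 add0r tr_row_mx !trmxK.
by rewrite mul_row_col addrC.
Qed.

Lemma leq_bad_count m n eps h : 2 <= h -> 5 * h <= n <= m + m ->
  (forall C B : 'M['F_2]_(m, n), low_rank eps C B -> \rank (symform C B) + 4 * h <= n) ->
  bad_count m n eps * 2 ^ (h * h) <= 2 * 2 ^ (2 * m * n).
Proof.
move=> le_2h le_5hnp low_rank_le.
pose f (CB : 'M['F_2]_(m, n) * 'M['F_2]_(m, n)) := row_mx CB.1^T CB.2^T.
have inj_f : injective f.
  by move=> [C1 B1] [C2 B2] /eq_row_mx[/trmx_inj /= -> /trmx_inj ->].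
have unitJ : hyperbolic_mx 'F_2 m \in unitmx by apply: hyperbolic_mx_unit.
have := leq_card_gram_rank_deficient unitJ le_2h le_5hnp; rewrite card_Fp //.
have -> : 2 * m * n = (m + m) * n by rewrite addnn -mul2n.
apply: leq_trans; rewrite leq_mul2r /bad_count -(card_imset _ inj_f); apply/orP; right.
apply/subset_leq_card/subsetP => R /imsetP[[C B]]; rewrite !inE => /= low ->.
by rewrite -symformE low_rank_le.
Qed.

(* Reals is imported only now: it rebinds the key %R (used above for ring_scope) and
   the nat notation ^ (hence the explicit expn below). *)
From Stdlib Require Import Reals Lra.

Lemma INR_expn b e : INR (expn b e) = (INR b ^ e)%R.
Proof. by elim: e => [|e IHe]; rewrite ?expnS -?multE ?mult_INR ?IHe. Qed.

Lemma prob_low_rank_le m n eps T :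
  bad_count m n eps * expn 2 T <= 2 * expn 2 (2 * m * n) ->
  (prob_low_rank m n eps <= Rpower 2 (1 - INR T))%R.
Proof.
have two : INR 2 = 2%R by rewrite /=; lra.
move=> /leP/le_INR; rewrite -!multE !mult_INR !INR_expn two /prob_low_rank.
set b := INR _; set E := (2 * m * n)%N => le_b.
have pow_gt0 (e : nat) : (0 < 2 ^ e)%R by apply: pow_lt; lra.
have gt0E := pow_gt0 E; have gt0T := pow_gt0 T.
rewrite Rpower_plus Rpower_Ropp Rpower_1 ?Rpower_pow; try lra.
apply/(Rmult_le_reg_r (2 ^ E * 2 ^ T)); first nra.
have -> : (b / 2 ^ E * (2 ^ E * 2 ^ T) = b * 2 ^ T)%R by field; lra.
by have -> : (2 * / 2 ^ T * (2 ^ E * 2 ^ T) = 2 * 2 ^ E)%R by field; lra.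
Qed.

Lemma low_rank_rank_le m n eps k (C B : 'M['F_2]_(m, n)) :
  (INR k <= eps * INR n)%R -> low_rank eps C B -> \rank (symform C B) + k <= n.
Proof.
rewrite /low_rank; case: Rle_dec => // rk_le k_le _.
by apply/leP/INR_le; rewrite plus_INR; lra.
Qed.

Lemma sqr_divn_ge H n : 0 < H -> 2 * H <= n ->
  (INR n ^ 2 / INR (8 * (H * H)) <= INR (n %/ H * (n %/ H)) - 1)%R.
Proof.
move=> H_gt0 le_2Hn; set h := n %/ H.
have le_2h : 2 <= h by rewrite -(mulnK 2 H_gt0) leq_div2r.
have : n * n + 8 * (H * H) <= 8 * (H * H) * (h * h) by have := ltn_ceil n H_gt0; nia.
move/leP/le_INR; rewrite plus_INR [INR (_ * (h * h))]mult_INR.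
have d_gt0 : (0 < INR (8 * (H * H)))%R by apply/lt_0_INR/ltP; rewrite !muln_gt0 H_gt0.
rewrite (_ : INR n ^ 2 = INR (n * n))%R; last by rewrite -multE mult_INR /=; ring.
move=> le_nd; apply: (Rmult_le_reg_l _ _ _ d_gt0).
by rewrite (_ : _ * (_ / _) = INR (n * n))%R; [lra | field; lra].
Qed.

Theorem lemmaD7 (eps alpha : R) :
  (0 < eps)%R -> (1 / 2 < alpha)%R -> (alpha < 1)%R ->
  exists delta : R, (0 < delta)%R /\
  exists N : nat, forall n m : nat, (N <= n)%N ->
    (alpha * INR n <= INR m)%R -> (m <= n)%N ->
    (prob_low_rank m n eps <= Rpower 2 (- delta * INR n ^ 2))%R.
Proof.
move=> eps_gt0 alpha_gt _.
have [K [K_lt /ltP K_gt0]] := archimed_cor1 eps eps_gt0.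
pose H := 5 * K; have H_gt0 : 0 < H by rewrite muln_gt0.
have epsH : (4 < eps * INR H)%R.
  have K_gt0R : (0 < INR K)%R by apply/lt_0_INR/ltP.
  have := Rmult_lt_compat_r _ _ _ K_gt0R K_lt; rewrite Rinv_l; last lra.
  by rewrite mult_INR /=; lra.
exists (/ INR (8 * (H * H)))%R; split.
  by apply/Rinv_0_lt_compat/lt_0_INR/ltP; rewrite muln_gt0 muln_gt0 H_gt0.
exists (2 * H) => n m le_2Hn alpha_m _; set h := n %/ H.
have le_hHn : h * H <= n by apply: leq_trunc_div.
have le_2h : 2 <= h by rewrite -(mulnK 2 H_gt0) leq_div2r.
have le_5hnm : 5 * h <= n <= m + m.
  have -> : 5 * h <= n by move: le_hHn; rewrite /H; nia.
  by apply/leP/INR_le; rewrite plus_INR; have := pos_INR n; nra.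
have le_4h_epsn : (INR (4 * h) <= eps * INR n)%R.
  move/leP/le_INR: le_hHn; rewrite mult_INR => le_hHnR.
  by have := pos_INR h; rewrite mult_INR [INR 4]/=; nra.
have count := leq_bad_count le_2h le_5hnm (fun C B => low_rank_rank_le le_4h_epsn).
apply: Rle_trans (prob_low_rank_le count) _; apply: Rle_Rpower; first lra.
by have := sqr_divn_ge H_gt0 le_2Hn; rewrite -/h; lra.
Qed.
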